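(* Let $(G,H)$ be a rooted graph and let $J_{\max}\subsetneq H$ be a primal subgraph of $(G,H)$ that is maximal with respect to inclusion among primal subgraphs. Then $m(J_{\max},H)<m(G,H)$.
   Context: For a graph $F$, $v_F,e_F$ are its numbers of vertices and edges. A rooted graph $(G,H)$ consists of a graph $H$ and an induced subgraph $G\subseteq H$ (the roots), with $e_H>e_G$. For subgraphs $A\subsetneq J\subseteq H$, $d(A,J)=(e_J-e_A)/(v_J-v_A)$ and $m(A,H)=\max_{A\subsetneq J\subseteq H}d(A,J)$. A subgraph $J$ with $G\subsetneq J\subseteq H$ and $d(G,J)=m(G,H)$ is called primal for $(G,H)$. *)

From mathcomp Require Import all_boot all_order all_algebra.
Set Implicit Arguments. Unset Strict Implicit. Unset Printing Implicit Defensive.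
Import Order.TTheory GRing.Theory Num.Theory.
Local Open Scope ring_scope.

(* A (finite simple) graph on a vertex universe T : finType is a pair
   (V, E) with V a set of vertices and E a set of edges, each edge a
   2-element subset of V. *)
Definition graph (T : finType) := ({set T} * {set {set T}})%type.

Definition vtx (T : finType) (F : graph T) : {set T} := F.1.
Definition edg (T : finType) (F : graph T) : {set {set T}} := F.2.

Definition nv (T : finType) (F : graph T) : nat := #|vtx F|.
Definition ne (T : finType) (F : graph T) : nat := #|edg F|.

Definition is_graph (T : finType) (F : graph T) : bool :=
  [forall e in edg F, (e \subset vtx F) && (#|e| == 2)%N].

Definition subgraph (T : finType) (A B : graph T) : bool :=
  [&& is_graph A, is_graph B, vtx A \subset vtx B & edg A \subset edg B].

Definition psubgraph (T : finType) (A B : graph T) : bool :=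
  subgraph A B && (A != B).

Definition induced (T : finType) (G H : graph T) : bool :=
  subgraph G H && (edg G == [set e in edg H | e \subset vtx G]).

Definition rooted (T : finType) (G H : graph T) : bool :=
  induced G H && (ne G < ne H)%N.

Definition dens (T : finType) (A J : graph T) : rat :=
  ((ne J)%:R - (ne A)%:R) / ((nv J)%:R - (nv A)%:R).

(* The subgraphs J with A ⊊ J ⊆ H over which m(A,H) is maximised;
   only those with v_J > v_A, for which d(A,J) is defined. *)
Definition admissible (T : finType) (A H J : graph T) : bool :=
  [&& psubgraph A J, subgraph J H & (nv A < nv J)%N].

Definition mdens (T : finType) (A H : graph T) : rat :=
  \big[Num.max/0]_(J : graph T | admissible A H J) dens A J.

Definition primal (T : finType) (G H J : graph T) : bool :=
  [&& psubgraph G J, subgraph J H & dens G J == mdens G H].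

From mathcomp Require Import all_boot all_order all_algebra.
From mathcomp Require Import ring.
Import Order.TTheory GRing.Theory Num.Theory.
Set Implicit Arguments. Unset Strict Implicit.
Local Open Scope ring_scope.

(* Suppose some J with Jmax ⊊ J ⊆ H had d(Jmax, J) >= m(G, H).  Since
   d(G, Jmax) = m(G, H), the mediant inequality gives d(G, J) >= m(G, H),
   so J is primal and strictly contains Jmax, against maximality.  Hence
   every d(Jmax, J) is below m(G, H), which is positive because H itself
   has positive density over G. *)

Lemma mediant_ge (R : realFieldType) (m x1 y1 x2 y2 : R) :
  0 < y1 -> 0 < y2 -> m <= x1 / y1 -> m <= x2 / y2 ->
  m <= (x1 + x2) / (y1 + y2).
Proof.
move=> y1_gt0 y2_gt0; rewrite !ler_pdivlMr ?addr_gt0 // => le1 le2.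
have -> : m * (y1 + y2) = m * y1 + m * y2 by ring.
exact: lerD.
Qed.

Section Density.

Variable T : finType.
Implicit Types A B C G H J K : graph T.

Lemma subgraph_trans A B C : subgraph A B -> subgraph B C -> subgraph A C.
Proof.
case/and4P=> gA _ vAB eAB /and4P[_ gC vBC eBC].
by rewrite /subgraph gA gC (subset_trans vAB vBC) (subset_trans eAB eBC).
Qed.

Lemma subgraph_refl A B : subgraph A B -> subgraph B B.
Proof. by case/and4P=> _ gB _ _; rewrite /subgraph gB !subxx. Qed.

Lemma leq_nv_subgraph A B : subgraph A B -> (nv A <= nv B)%N.
Proof. by case/and4P=> _ _ vAB _; apply: subset_leq_card. Qed.

Lemma rooted_subgraph G H : rooted G H -> subgraph G H.
Proof. by case/andP=> /andP[]. Qed.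

Lemma rooted_ltn_nv G H : rooted G H -> (nv G < nv H)%N.
Proof.
case/andP=> /andP[sGH /eqP eG] lt_e.
case/and4P: sGH => _ gH vGH _.
apply: proper_card; rewrite properE vGH /=.
apply: contraTN lt_e => vHG; rewrite /ne eG -leqNgt subset_leq_card //.
apply/subsetP=> e eH; rewrite inE eH.
by case/andP: (forall_inP gH e eH) => /subset_trans->.
Qed.

Lemma admissible_subgraph A H J :
  subgraph A J -> subgraph J H -> (nv A < nv J)%N -> admissible A H J.
Proof.
move=> sAJ sJH ltAJ; rewrite /admissible /psubgraph sAJ sJH ltAJ /= !andbT.
by apply: contraTneq ltAJ => ->; rewrite ltnn.
Qed.

Lemma dens_trans_ge (m : rat) A B C :
  (nv A < nv B)%N -> (nv B < nv C)%N ->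
  m <= dens A B -> m <= dens B C -> m <= dens A C.
Proof.
move=> ltAB ltBC leAB leBC.
have -> : dens A C = (((ne B)%:R - (ne A)%:R) + ((ne C)%:R - (ne B)%:R))
                    / (((nv B)%:R - (nv A)%:R) + ((nv C)%:R - (nv B)%:R)).
  by rewrite /dens; congr (_ / _); ring.
by apply: mediant_ge; rewrite ?subr_gt0 ?ltr_nat.
Qed.

Lemma le_dens_mdens A H J : admissible A H J -> dens A J <= mdens A H.
Proof. exact: le_bigmax_cond. Qed.

Lemma mdens_lt (x : rat) A H :
  0 < x -> (forall J, admissible A H J -> dens A J < x) -> mdens A H < x.
Proof. exact: bigmax_lt. Qed.

Lemma rooted_mdens_gt0 G H : rooted G H -> 0 < mdens G H.
Proof.
move=> rGH; have sGH := rooted_subgraph rGH; have ltGH := rooted_ltn_nv rGH.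
apply: lt_le_trans (le_dens_mdens (admissible_subgraph sGH (subgraph_refl sGH) ltGH)).
by case/andP: rGH => _ lt_e; rewrite divr_gt0 // subr_gt0 ltr_nat.
Qed.

(* A primal J with v_J = v_G would have d(G, J) = 0 (division by zero is
   0 in [rat]), which is impossible once m(G, H) > 0. *)
Lemma primal_admissible G H J :
  0 < mdens G H -> primal G H J -> admissible G H J.
Proof.
move=> m_gt0 /and3P[/andP[sGJ _] sJH /eqP dGJ].
apply: admissible_subgraph => //; rewrite ltn_neqAle leq_nv_subgraph // andbT.
by apply: contraTneq m_gt0 => eq_nv; rewrite -dGJ /dens eq_nv subrr invr0 mulr0 ltxx.
Qed.

Lemma primal_extend G H J K :
  0 < mdens G H -> primal G H J -> admissible J H K ->
  mdens G H <= dens J K -> primal G H K.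
Proof.
move=> m_gt0 pJ /and3P[/andP[sJK _] sKH ltJK] leJK.
have /and3P[/andP[sGJ _] _ ltGJ] := primal_admissible m_gt0 pJ.
have admK := admissible_subgraph (subgraph_trans sGJ sJK) sKH (ltn_trans ltGJ ltJK).
case/and3P: pJ => _ _ /eqP dGJ; case/and3P: (admK) => pGK _ _.
rewrite /primal pGK sKH eq_le le_dens_mdens //=.
by apply: dens_trans_ge ltGJ ltJK _ leJK; rewrite dGJ.
Qed.

End Density.

Theorem lemma14 (T : finType) (G H Jmax : graph T) :
  rooted G H ->
  primal G H Jmax ->
  psubgraph Jmax H ->
  (forall J : graph T, primal G H J -> subgraph Jmax J -> J = Jmax) ->
  mdens Jmax H < mdens G H.
Proof.
move=> rGH pJ _ maxJ; have m_gt0 := rooted_mdens_gt0 rGH.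
apply: mdens_lt => // K admK; rewrite ltNge; apply/negP=> leK.
have pK := primal_extend m_gt0 pJ admK leK.
case/and3P: admK => /andP[sJK _] _.
by rewrite (maxJ K pK sJK) ltnn.
Qed.
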